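(* In the setting described in the context, RLO-CCU-SD is feasible if and only if $\sum_{j\in J}a_{ij}\hat{x}_j\ge b_i$ for all $i\in I$ and $\hat{I}\neq\varnothing$.
   Context: Let $I=\{1,\dots,m\}$, $J=\{1,\dots,n\}$. Given are $a_{ij}\in\mathbb{R}$, $b\in\mathbb{R}^m$, index sets $J_i\subseteq J$, nonnegative numbers $\alpha_{ij}$ ($j\in J_i,i\in I$), an observed point $\hat{x}\in\mathbb{R}^n$, a prior $\hat{\Gamma}\in\mathbb{R}^m$ and a norm $\|\cdot\|$ on $\mathbb{R}^m$. For $i\in I$ and $x\in\mathbb{R}^n$ let $j^i_1(x),\dots,j^i_{|J_i|}(x)$ order $J_i$ so that $\alpha_{ij^i_k(x)}|x_{j^i_k(x)}|$ is the $k$-th largest element of $\{\alpha_{ij}|x_j|\}_{j\in J_i}$, and for $\Gamma_i\in[0,|J_i|]$ let $P_i(\Gamma_i,x)=\sum_{k=1}^{\lfloor\Gamma_i\rfloor}\alpha_{ij^i_k(x)}|x_{j^i_k(x)}|+(\Gamma_i-\lfloor\Gamma_i\rfloor)\alpha_{ij^i_{\lceil\Gamma_i\rceil}(x)}|x_{j^i_{\lceil\Gamma_i\rceil}(x)}|$ (last term $0$ for integer $\Gamma_i$). Let $s_i=\sum_{j\in J}a_{ij}\hat{x}_j-b_i$, $\hat{I}=\{i\in I:0\le s_i\le\sum_{j\in J_i}\alpha_{ij}|\hat{x}_j|\}$, and for $i\in\hat{I}$ let $\underline{\Gamma}_i=\min\{\sum_{j\in J_i}w_j:\sum_{j\in J_i}\alpha_{ij}|\hat{x}_j|w_j=s_i,\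 0\le w_j\le1\}$, so $s_i=P_i(\underline{\Gamma}_i,\hat{x})$. Standing assumption: for each $i\in\hat{I}$, $\underline{\Gamma}_i$ is the unique $\Gamma_i\in[0,|J_i|]$ with $s_i=P_i(\Gamma_i,\hat{x})$. The problem RLO-CCU-SD is \[ \min_{\Gamma,c,u,y,z,\pi,\varphi,\lambda,\mu}\ \|\Gamma-\hat{\Gamma}\| \] subject to: $\sum_{j\in J}c_j\hat{x}_j-\sum_{i\in I}b_i\pi_i=0$; $\alpha_{ij}\hat{x}_j+u_{ij}\ge0$ and $-\alpha_{ij}\hat{x}_j+u_{ij}\ge0$ ($j\in J_i,i\in I$); $y_{ij}+z_i\ge u_{ij}$ ($j\in J_i,i\in I$); $\sum_{j\in J}a_{ij}\hat{x}_j-\sum_{j\in J_i}y_{ij}-\Gamma_iz_i\ge b_i$ ($i\in I$); $y_{ij},z_i\ge0$; $0\le\Gamma_i\le|J_i|$ ($i\in I$); $\sum_{i\in I}\pi_i=1$; $\sum_{i\in I}a_{ij}\pi_i+\sum_{i\in I:j\in J_i}\alpha_{ij}(\lambda_{ij}-\mu_{ij})=c_j$ ($j\in J$); $\varphi_{ij}\le\pi_i$ and $\varphi_{ij}=\lambda_{ij}+\mu_{ij}$ ($j\in J_i,i\in I$); $\sum_{j\in J_i}\varphi_{ij}\le\Gamma_i\pi_i$ ($i\in I$); $\pi_i,\varphi_{ij},\lambda_{ij},\mu_{ij}\ge0$ ($j\in J_i,i\in I$). *)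

From mathcomp Require Import all_boot all_order all_algebra.
From mathcomp Require Import reals.
Set Implicit Arguments. Unset Strict Implicit. Unset Printing Implicit Defensive.
Import Order.TTheory GRing.Theory Num.Theory.
Local Open Scope ring_scope.

(* P_i(G, x): the sum of the floor(G) largest values of alpha_ij |x_j| (j in Ji)
   plus (G - floor G) times the ceil(G)-th largest one (0 if G is an integer). *)
Definition Pfun (R : realType) (n : nat) (Ji : {set 'I_n})
    (al : 'I_n -> R) (x : 'I_n -> R) (G : R) : R :=
  let s := sort (fun u v : R => v <= u) [seq al j * `|x j| | j <- enum Ji] in
  let k := Num.truncn G in
  \sum_(t < k) nth 0 s t + (G - k%:R) * nth 0 s k.

Definition slack (R : realType) (m n : nat) (a : 'I_m -> 'I_n -> R)
    (b : 'I_m -> R) (xh : 'I_n -> R) (i : 'I_m) : R :=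
  \sum_(j < n) a i j * xh j - b i.

Definition in_Ihat (R : realType) (m n : nat) (a : 'I_m -> 'I_n -> R)
    (b : 'I_m -> R) (J : 'I_m -> {set 'I_n}) (al : 'I_m -> 'I_n -> R)
    (xh : 'I_n -> R) (i : 'I_m) : Prop :=
  0 <= slack a b xh i <= \sum_(j in J i) al i j * `|xh j|.

Definition RLO_CCU_SD_feasible (R : realType) (m n : nat)
    (a : 'I_m -> 'I_n -> R) (b : 'I_m -> R) (J : 'I_m -> {set 'I_n})
    (al : 'I_m -> 'I_n -> R) (xh : 'I_n -> R) : Prop :=
  exists (G : 'I_m -> R) (c : 'I_n -> R) (u y : 'I_m -> 'I_n -> R)
         (z pi : 'I_m -> R) (phi lam mu : 'I_m -> 'I_n -> R),
    [/\ \sum_(j < n) c j * xh j - \sum_(i < m) b i * pi i = 0,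
        (forall i j, j \in J i ->
           [/\ al i j * xh j + u i j >= 0, - (al i j * xh j) + u i j >= 0,
               y i j + z i >= u i j & y i j >= 0] /\
           [/\ phi i j <= pi i, phi i j = lam i j + mu i j,
               phi i j >= 0, lam i j >= 0 & mu i j >= 0]),
        (forall i, [/\ \sum_(j < n) a i j * xh j - \sum_(j in J i) y i j
                        - G i * z i >= b i,
                      z i >= 0, 0 <= G i & G i <= #|J i|%:R] /\
                   (\sum_(j in J i) phi i j <= G i * pi i /\ pi i >= 0)),
        \sum_(i < m) pi i = 1 &
        (forall j, \sum_(i < m) a i j * pi i
                   + \sum_(i < m | j \in J i) al i j * (lam i j - mu i j) = c j)].

From mathcomp Require Import all_boot all_order all_algebra.
From mathcomp Require Import reals.
From mathcomp Require Import lra.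
Import Order.TTheory GRing.Theory Num.Theory.
Local Open Scope ring_scope.

(* Necessity.  The robust row constraints force [s_i >= 0].  The strong
   duality equation can be rewritten as
   [sum_i (pi_i s_i + sum_j al_ij (lam_ij - mu_ij) xh_j) = 0], and since
   [lam_ij + mu_ij <= pi_i] each inner term is at least [- pi_i al_ij |xh_j|];
   hence [sum_i pi_i (s_i - sum_j al_ij |xh_j|) <= 0] for the probability
   vector [pi], and some row has [s_i <= sum_j al_ij |xh_j|].

   Sufficiency.  Put all the dual weight on a row [i0] of [Ihat].  A
   fractional-knapsack (threshold) solution [w] in [[0,1]] of
   [sum_j w_j al_i0j |xh_j| = s_i0], with threshold [z], gives
   [Gamma = sum_j w_j] and [y_j = max(0, al_i0j |xh_j| - z)] meeting the
   primal row constraint with equality, i.e. zero duality gap; every other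
   row gets the same construction with right-hand side [0]. *)

Section Weights.
Variables (R : realFieldType) (I : finType).

Lemma divr_in01_mulK [d x : R] : 0 <= d <= x -> 0 <= d / x <= 1 /\ d / x * x = d.
Proof.
case/andP=> d_ge0 d_le; have [x0|x_neq0] := eqVneq x 0.
  have -> : d = 0 by apply/le_anti; rewrite d_ge0 -x0 d_le.
  by rewrite !mul0r lexx ler01.
have x_gt0 : 0 < x by rewrite lt_def x_neq0 (le_trans d_ge0 d_le).
split; last exact: mulfVK.
by rewrite ler_pdivrMr // mul1r d_le andbT divr_ge0 // ltW.
Qed.

Lemma exists_le0_of_wsum (p d : I -> R) :
  (forall i, 0 <= p i) -> \sum_i p i = 1 -> \sum_i p i * d i <= 0 ->
  exists i, d i <= 0.
Proof.
move=> p_ge0 p_sum1 wsum_le0.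
have [/existsP[i d_le0]|/existsPn d_gt0] := boolP [exists i, d i <= 0].
  by exists i.
have d_pos i : 0 < d i by rewrite ltNge d_gt0.
have pd_ge0 i : 0 <= p i * d i by rewrite mulr_ge0 // ltW.
have /psumr_eq0P pd0 : \sum_i p i * d i = 0.
  by apply/le_anti; rewrite wsum_le0 sumr_ge0.
have p0 i : p i = 0.
  have /eqP := pd0 (fun i _ => pd_ge0 i) i isT.
  by rewrite mulf_eq0 (gt_eqF (d_pos i)) orbF => /eqP.
by move: p_sum1; rewrite big1 // => /eqP; rewrite eq_sym oner_eq0.
Qed.

Lemma threshold_weights (v : I -> R) (S : {set I}) (t : R) :
  {in S, forall j, 0 <= v j} -> 0 <= t <= \sum_(j in S) v j ->
  exists z (w : I -> R), [/\ 0 <= z, {in S, forall j, 0 <= w j <= 1},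
    {in S, forall j, z < v j -> w j = 1}, {in S, forall j, v j < z -> w j = 0}
    & \sum_(j in S) w j * v j = t].
Proof.
(* Induction on [#|S|], removing an index [k0] of smallest [v]: if the other
   indices still exceed [t] they carry all the weight and the threshold is
   at least [v k0], so [w k0 = 0]; otherwise they get weight 1 and [k0] the
   fractional remainder, with threshold [v k0]. *)
have [k] := ubnP #|S|; elim: k S t => // k IH S t; rewrite ltnS => cardS.
move=> v_ge0 /andP[t_ge0 t_le].
have [S0|[j0 Sj0]] := set_0Vmem S.
  move: t_le; rewrite S0 big_set0 => t_le0.
  have -> : t = 0 by apply/le_anti; rewrite t_le0.
  by exists 0, (fun=> 0); rewrite big_set0; split=> // j; rewrite inE.
case: (arg_minP v Sj0) => k0 Sk0 k0_min; have {}Sk0 : k0 \in S := Sk0.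
set S' := S :\ k0.
have inS' j : (j \in S') = (j != k0) && (j \in S) by rewrite in_setD1.
have splitS (F : I -> R) : \sum_(j in S) F j = F k0 + \sum_(j in S') F j.
  exact: big_setD1.
move: t_le; rewrite splitS => t_le.
have [sum'_le|t_lt] := lerP (\sum_(j in S') v j) t.
  have rest_bounds : 0 <= t - \sum_(j in S') v j <= v k0.
    lra.
  have [w0_01 w0K] := divr_in01_mulK rest_bounds.
  exists (v k0), (fun j => if j == k0 then (t - \sum_(j in S') v j) / v k0 else 1).
  split.
  - exact: v_ge0.
  - by move=> j _; case: eqP; rewrite ?lexx ?ler01.
  - by move=> j _; case: eqP => [->|]; rewrite ?ltxx.
  - by move=> j Sj; rewrite ltNge k0_min.
  rewrite splitS eqxx w0K [X in _ + X](eq_bigr v) ?subrK // => j.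
  rewrite inS' => /andP[/negPf -> _].
  exact: mul1r.
have cardS' : (#|S'| < k)%N by rewrite (cardsD1 k0) Sk0 add1n in cardS.
have v'_ge0 : {in S', forall j, 0 <= v j}.
  by move=> j; rewrite inS' => /andP[_ /v_ge0].
have t_bounds : 0 <= t <= \sum_(j in S') v j by rewrite t_ge0 ltW.
have [z [w [z_ge0 w01 w1 w0 wsum]]] := IH S' t cardS' v'_ge0 t_bounds.
have vk0_le : v k0 <= z.
  rewrite leNgt; apply/negP => z_lt.
  move: t_lt; rewrite -wsum (eq_bigr v) ?ltxx // => j S'j.
  have /andP[_ Sj] : (j != k0) && (j \in S) by rewrite -inS'.
  by rewrite w1 ?mul1r // (lt_le_trans z_lt) ?k0_min.
exists z, (fun j => if j == k0 then 0 else w j); split=> //.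
- by move=> j Sj; case: eqP => [_|/eqP jk0]; rewrite ?lexx ?ler01 ?w01 ?inS' ?jk0.
- move=> j Sj; case: eqP => [->|/eqP jk0]; first lra.
  by apply: w1; rewrite inS' jk0.
- by move=> j Sj; case: eqP => // /eqP jk0; apply: w0; rewrite inS' jk0.
rewrite splitS eqxx mul0r add0r -wsum; apply: eq_bigr => j.
by rewrite inS' => /andP[/negPf ->].
Qed.

Lemma max_threshold_mul (x z w : R) : (z < x -> w = 1) -> (x < z -> w = 0) ->
  Num.max 0 (x - z) + w * z = w * x.
Proof.
move=> w1 w0; case: (ltgtP z x) => [zx|xz|<-].
- by rewrite w1 // max_r ?subr_ge0 ?ltW // !mul1r subrK.
- by rewrite w0 // max_l ?subr_le0 ?ltW // !mul0r addr0.
- by rewrite subrr maxxx add0r.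
Qed.

Lemma threshold_certificate (v : I -> R) (S : {set I}) (t : R) :
  {in S, forall j, 0 <= v j} -> 0 <= t <= \sum_(j in S) v j ->
  exists z (w : I -> R), [/\ 0 <= z, {in S, forall j, 0 <= w j <= 1},
    \sum_(j in S) w j * v j = t
    & \sum_(j in S) Num.max 0 (v j - z) + (\sum_(j in S) w j) * z = t].
Proof.
move=> v_ge0 t_bounds.
have [z [w [z_ge0 w01 w1 w0 wsum]]] := @threshold_weights v S t v_ge0 t_bounds.
exists z, w; split=> //; rewrite -wsum mulr_suml -big_split /=.
by apply: eq_bigr => j Sj; apply: max_threshold_mul; [exact: w1 | exact: w0].
Qed.

Lemma ler_weighted_normN (al lam mu p x : R) :
  0 <= al -> 0 <= lam -> 0 <= mu -> lam + mu <= p ->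
  - (p * (al * `|x|)) <= al * (lam - mu) * x.
Proof.
move=> al_ge0 lam_ge0 mu_ge0 le_p.
have [x_ge0|x_lt0] := lerP 0 x; [rewrite ger0_norm // | rewrite ltr0_norm //].
- have p_lam_mu : 0 <= p + lam - mu by lra.
  have := mulr_ge0 (mulr_ge0 al_ge0 x_ge0) p_lam_mu; nra.
- have p_mu_lam : 0 <= p - lam + mu by lra.
  have Nx_ge0 : 0 <= - x by rewrite oppr_ge0 ltW.
  have := mulr_ge0 (mulr_ge0 al_ge0 Nx_ge0) p_mu_lam; nra.
Qed.

Lemma sign_split_mulE (p x : R) :
  ((if 0 <= x then 0 else p) - (if 0 <= x then p else 0)) * x = - (p * `|x|).
Proof. by have [x_ge0|x_lt0] := lerP 0 x; [rewrite ger0_norm | rewrite ltr0_norm]; lra. Qed.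

End Weights.

Section Feasibility.
Variables (R : realType) (m n : nat) (a : 'I_m -> 'I_n -> R) (b : 'I_m -> R).
Variables (J : 'I_m -> {set 'I_n}) (al : 'I_m -> 'I_n -> R) (xh : 'I_n -> R).
Hypothesis al_ge0 : forall i j, j \in J i -> 0 <= al i j.

Lemma duality_gap_eq [c : 'I_n -> R] [pi : 'I_m -> R] [lam mu : 'I_m -> 'I_n -> R] :
  (forall j, \sum_(i < m) a i j * pi i
             + \sum_(i < m | j \in J i) al i j * (lam i j - mu i j) = c j) ->
  \sum_(j < n) c j * xh j - \sum_(i < m) b i * pi i =
  \sum_(i < m) (pi i * slack a b xh i
                + \sum_(j in J i) al i j * (lam i j - mu i j) * xh j).
Proof.
move=> c_def; under eq_bigr do rewrite -c_def mulrDl !mulr_suml.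
rewrite big_split [in RHS]big_split /= addrAC.
congr (_ + _); last by rewrite (exchange_big_dep xpredT).
rewrite exchange_big -sumrB; apply: eq_bigr => i _.
rewrite /slack mulrBr mulr_sumr mulrC; congr (_ - _).
by apply: eq_bigr => j _; rewrite mulrAC mulrC.
Qed.

Lemma feasible_sum_ge : RLO_CCU_SD_feasible a b J al xh ->
  forall i, b i <= \sum_(j < n) a i j * xh j.
Proof.
case=> G [c [u [y [z [pi [phi [lam [mu [_ row_j row_i _ _]]]]]]]]] i.
have [[row_le z_ge0 G_ge0 _] _] := row_i i.
have y_ge0 : 0 <= \sum_(j in J i) y i j.
  by apply: sumr_ge0 => j Jj; have [[_ _ _ ->]] := row_j i j Jj.
have := mulr_ge0 G_ge0 z_ge0; lra.
Qed.

Lemma feasible_exists_Ihat :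
  RLO_CCU_SD_feasible a b J al xh -> exists i, in_Ihat a b J al xh i.
Proof.
move=> feas.
have slack_ge0 i : 0 <= slack a b xh i by rewrite subr_ge0 feasible_sum_ge.
case: feas => G [c [u [y [z [pi [phi [lam [mu [gap0 row_j row_i pi_sum1 c_def]]]]]]]]].
have [i] : exists i, slack a b xh i - \sum_(j in J i) al i j * `|xh j| <= 0.
  apply: (@exists_le0_of_wsum _ _ pi) => //; first by move=> i; case: (row_i i) => _ [].
  rewrite -[leRHS]gap0 (duality_gap_eq c_def); apply: ler_sum => i _.
  rewrite mulrBr lerD2l mulr_sumr -sumrN; apply: ler_sum => j Jj.
  have [_ [phi_le phiE _ lam_ge0 mu_ge0]] := row_j i j Jj.
  by apply: ler_weighted_normN; rewrite ?al_ge0 // -phiE.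
by rewrite subr_le0 => dev_ge; exists i; rewrite /in_Ihat slack_ge0.
Qed.

Lemma feasible_of_certificates (pi z : 'I_m -> R) (w : 'I_m -> 'I_n -> R) :
  (forall i, 0 <= pi i) -> \sum_i pi i = 1 -> (forall i, 0 <= z i) ->
  (forall i j, j \in J i -> 0 <= w i j <= 1) ->
  (forall i, \sum_(j in J i) Num.max 0 (al i j * `|xh j| - z i)
             + (\sum_(j in J i) w i j) * z i <= slack a b xh i) ->
  (forall i, pi i * slack a b xh i
             = pi i * \sum_(j in J i) w i j * (al i j * `|xh j|)) ->
  RLO_CCU_SD_feasible a b J al xh.
Proof.
move=> pi_ge0 pi_sum1 z_ge0 w01 row_le compl.
pose phi i j := pi i * w i j.
pose lam i j := if 0 <= xh j then 0 else phi i j.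
pose mu i j := if 0 <= xh j then phi i j else 0.
pose c j := \sum_(i < m) a i j * pi i
            + \sum_(i < m | j \in J i) al i j * (lam i j - mu i j).
exists (fun i => \sum_(j in J i) w i j), c, (fun i j => al i j * `|xh j|).
exists (fun i j => Num.max 0 (al i j * `|xh j| - z i)), z, pi, phi, lam, mu.
split=> //.
- rewrite (duality_gap_eq (fun j => erefl (c j))) big1 // => i _.
  under eq_bigr do rewrite -mulrA sign_split_mulE mulrN mulrCA -mulrA.
  by rewrite sumrN -mulr_sumr compl subrr.
- move=> i j Jj; have [w_ge0 w_le1] := andP (w01 i j Jj).
  have al_norm : al i j * `|xh j| = `|al i j * xh j|.
    by rewrite normrM ger0_norm ?al_ge0.
  split; split.
  + by have := ler_norm (- (al i j * xh j)); rewrite normrN -al_norm; lra.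
  + by have := ler_norm (al i j * xh j); rewrite -al_norm; lra.
  + by rewrite -lerBlDr le_max lexx orbT.
  + by rewrite le_max lexx.
  + exact: ler_piMr.
  + by rewrite /lam /mu; case: ifP; rewrite ?add0r ?addr0.
  + exact: mulr_ge0.
  + by rewrite /lam; case: ifP => // _; apply: mulr_ge0.
  + by rewrite /mu; case: ifP => // _; apply: mulr_ge0.
- move=> i; split; last by rewrite /phi -mulr_sumr mulrC.
  split=> //; last by rewrite -sum1_card natr_sum ler_sum // => j /w01 /andP[].
  + by have := row_le i; rewrite /slack; lra.
  + by apply: sumr_ge0 => j /w01 /andP[].
Qed.

Lemma feasible_of_Ihat :
  (forall i, b i <= \sum_(j < n) a i j * xh j) ->
  (exists i, in_Ihat a b J al xh i) -> RLO_CCU_SD_feasible a b J al xh.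
Proof.
move=> b_le [i0 /andP[slack0_ge0 slack0_le]].
have slack_ge0 i : 0 <= slack a b xh i by rewrite subr_ge0.
pose pi i : R := if i == i0 then 1 else 0.
pose t i := pi i * slack a b xh i.
have cert i : exists z (w : 'I_n -> R), [/\ 0 <= z, {in J i, forall j, 0 <= w j <= 1},
    \sum_(j in J i) w j * (al i j * `|xh j|) = t i
  & \sum_(j in J i) Num.max 0 (al i j * `|xh j| - z) + (\sum_(j in J i) w j) * z = t i].
  apply: threshold_certificate => [j Jj|]; first by rewrite mulr_ge0 ?al_ge0.
  rewrite /t /pi; case: eqP => [->|_]; first by rewrite mul1r slack0_ge0.
  by rewrite mul0r lexx sumr_ge0 // => j Jj; rewrite mulr_ge0 ?al_ge0.
have /fin_all_exists[z /fin_all_exists[w zw_cert]] := cert.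
have pi_ge0 i : 0 <= pi i by rewrite /pi; case: eqP.
apply: (@feasible_of_certificates pi z w) => // [|i|i j Jj|i|i].
- by rewrite -big_mkcond big_pred1_eq.
- by case: (zw_cert i).
- by case: (zw_cert i) => _ /(_ j Jj).
- have [_ _ _ ->] := zw_cert i; rewrite /t /pi.
  by case: eqP; rewrite ?mul1r ?mul0r.
- have [_ _ -> _] := zw_cert i; rewrite /t /pi.
  by case: eqP; rewrite ?mul1r ?mul0r.
Qed.

End Feasibility.

Theorem proposition5 (R : realType) (m n : nat)
    (a : 'I_m -> 'I_n -> R) (b : 'I_m -> R) (J : 'I_m -> {set 'I_n})
    (al : 'I_m -> 'I_n -> R) (xh : 'I_n -> R)
    (hal : forall i j, j \in J i -> 0 <= al i j)
    (huniq : forall i, in_Ihat a b J al xh i ->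
       forall G1 G2 : R, 0 <= G1 <= #|J i|%:R -> 0 <= G2 <= #|J i|%:R ->
         Pfun (J i) (al i) xh G1 = slack a b xh i ->
         Pfun (J i) (al i) xh G2 = slack a b xh i -> G1 = G2) :
  RLO_CCU_SD_feasible a b J al xh <->
  ((forall i, \sum_(j < n) a i j * xh j >= b i) /\
   exists i, in_Ihat a b J al xh i).
Proof.
split.
- by move=> feas; split; [exact: feasible_sum_ge feas | exact: feasible_exists_Ihat hal feas].
- by case; exact: feasible_of_Ihat.
Qed.
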